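(* Let $(B,\sqsubseteq)$ be a $\mathsf{DCPO}_\bot$-ordered functor with a cofree comonad $(B^\infty,\epsilon,\delta)$ such that $B$ preserves weak pullbacks, let $\Sigma$ be a functor with a free monad $(\Sigma^*,\eta,\mu)$, and let $\rho\colon\Sigma B^\infty\Rightarrow B\Sigma^*$ be a monotone biGSOS specification. Then there exists a distributive law $\lambda\colon\Sigma^*B^\infty\Rightarrow B^\infty\Sigma^*$ of the monad $(\Sigma^*,\eta,\mu)$ over the comonad $(B^\infty,\epsilon,\delta)$ whose operational model is the least supported model of $\rho$.
   Context: An ordered functor $(B,\sqsubseteq)$ is a functor $B\colon\mathsf{Set}\to\mathsf{Set}$ together with a preorder $\sqsubseteq_{BX}$ on $BX$ for every set $X$, such that $Bf$ is monotone for every function $f$. It is $\mathsf{DCPO}_\bot$-ordered if moreover each $\sqsubseteq_{BX}$ is a partial order making $BX$ a pointed DCPO (least element and suprema of all directed subsets), and each $Bf$ is continuous, i.e. preserves suprema of all directed subsets including the empty one. Relation lifting: for $R\subseteq X\times Y$ with projections $\pi_1,\pi_2$ and any functor $F$, $\mathsf{Rel}(F)(R)=\{(b,c)\in FX\times FY\mid\exists d\in FR.\ F\pi_1(d)=b,\ F\pi_2(d)=c\}$; $\mathsf{Rel}_{\sqsubseteq}(B)(R)=\{(b,c)\mid\exists b',c'.\ b\sqsubseteq b',\ (b',c')\in\mathsf{Rel}(B)(R),\ c'\sqsubseteq c\}$. For coalgebras $f\colon X\to BX$, $g\colon Y\to BY$, $R\subseteq X\times Y$ is a simulation if $(f(x),g(y))\in\mathsf{Rel}_{\sqsubseteq}(B)(R)$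 for all $(x,y)\in R$; similarity is the greatest simulation. Cofree comonad: for each set $X$, $\theta_X\colon B^\infty X\to BB^\infty X$, $\epsilon_X\colon B^\infty X\to X$ with $\langle\theta_X,\epsilon_X\rangle$ a final $B(-)\times X$-coalgebra; for $f\colon X\to BX$, $f^\infty\colon X\to B^\infty X$ is the unique coalgebra morphism from $\langle f,\mathrm{id}_X\rangle$ to $\langle\theta_X,\epsilon_X\rangle$; $B^\infty h$ for $h\colon X\to Y$ is the unique coalgebra morphism from $\langle\theta_X,h\circ\epsilon_X\rangle$ to $\langle\theta_Y,\epsilon_Y\rangle$; the comultiplication is $\delta_X=(\theta_X)^\infty$. The functor $B(-)\times X$ is ordered by $(b,x)\,\widetilde\sqsubseteq\,(c,y)$ iff $b\sqsubseteq c$ and $x=y$; $\lesssim_{B^\infty X}$ is the similarity of $\langle\theta_X,\epsilon_X\rangle$ with itself w.r.t. this order. Free monad: for each set $X$, $\iota_X\colon\Sigma\Sigma^*X\to\Sigma^*X$, $\eta_X\colon X\to\Sigma^*X$ with $[\iota_X,\eta_X]$ an initial algebra for $\Sigma(-)+X$; $\mu_X\colon\Sigma^*\Sigma^*X\to\Sigma^*X$ is the unique map with $\mu_X\circ\eta_{\Sigma^*X}=\mathrm{id}$ and $\mu_X\circ\iota_{\Sigma^*X}=\iota_X\circ\Sigma\mu_X$. A biGSOS specification is a natural transformation $\rho\colon\Sigma B^\infty\Rightarrow B\Sigma^*$; it is monotone if for every set $X$ and all $u,v\in\Sigma B^\infty X$ with $(u,v)\in\mathsf{Rel}(\Sigma)(\lesssim_{B^\infty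 X})$, $\rho_X(u)\sqsubseteq_{B\Sigma^*X}\rho_X(v)$. A supported model of $\rho$ is $f\colon\Sigma^*\emptyset\to B\Sigma^*\emptyset$ with $f\circ\iota_\emptyset=B\mu_\emptyset\circ\rho_{\Sigma^*\emptyset}\circ\Sigma f^\infty$; the least one is least in the pointwise order $\sqsubseteq_{B\Sigma^*\emptyset}$. A distributive law of the monad $(T,\eta,\mu)$ over the comonad $(D,\epsilon,\delta)$ is a natural transformation $\lambda\colon TD\Rightarrow DT$ with $\lambda\circ\eta D=D\eta$, $\epsilon T\circ\lambda=T\epsilon$, $\lambda\circ\mu D=D\mu\circ\lambda T\circ T\lambda$ and $D\lambda\circ\lambda D\circ T\delta=\delta T\circ\lambda$. The operational model of such $\lambda$ (with $T=\Sigma^*$, $D=B^\infty$) is the unique function $m\colon\Sigma^*\emptyset\to B\Sigma^*\emptyset$ such that $h=m^\infty$ satisfies $h\circ\mu_\emptyset=B^\infty\mu_\emptyset\circ\lambda_{\Sigma^*\emptyset}\circ\Sigma^*h$. *)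

Definition U := Type.

Record Functor : Type := {
  fobj :> U -> U;
  fmap : forall (A B : U), (A -> B) -> fobj A -> fobj B;
  fmap_id : forall (A : U) (x : fobj A), fmap A A (fun a => a) x = x;
  fmap_comp : forall (A B C : U) (f : A -> B) (g : B -> C) (x : fobj A),
      fmap A C (fun a => g (f a)) x = fmap B C g (fmap A B f x)
}.
Arguments fmap f0 {A B} _ _.

Definition is_ub {T : Type} (le : T -> T -> Prop) (D : T -> Prop) (s : T) : Prop :=
  forall x, D x -> le x s.
Definition is_lub {T : Type} (le : T -> T -> Prop) (D : T -> Prop) (s : T) : Prop :=
  is_ub le D s /\ forall u, is_ub le D u -> le s u.
Definition directed {T : Type} (le : T -> T -> Prop) (D : T -> Prop) : Prop :=
  (exists x, D x) /\
  forall x y, D x -> D y -> exists z, D z /\ le x z /\ le y z.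

Definition ordered_functor (B : Functor) (le : forall X : U, B X -> B X -> Prop) : Prop :=
  (forall X (x : B X), le X x x) /\
  (forall X (x y z : B X), le X x y -> le X y z -> le X x z) /\
  (forall (X Y : U) (f : X -> Y) (x y : B X), le X x y -> le Y (fmap B f x) (fmap B f y)).

Definition dcpo_bot_ordered (B : Functor) (le : forall X : U, B X -> B X -> Prop) : Prop :=
  ordered_functor B le /\
  (forall X (x y : B X), le X x y -> le X y x -> x = y) /\
  (forall X : U, exists bot : B X, forall x, le X bot x) /\
  (forall (X : U) (D : B X -> Prop), directed (le X) D -> exists s, is_lub (le X) D s) /\
  (forall (X Y : U) (f : X -> Y) (D : B X -> Prop) (s : B X),
      (directed (le X) D \/ (forall x, ~ D x)) ->
      is_lub (le X) D s ->
      is_lub (le Y) (fun y => exists x, D x /\ y = fmap B f x) (fmap B f s)).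

Definition is_weak_pullback {X Y Z W : U} (f : X -> Z) (g : Y -> Z)
    (p1 : W -> X) (p2 : W -> Y) : Prop :=
  (forall w, f (p1 w) = g (p2 w)) /\
  forall (V : U) (q1 : V -> X) (q2 : V -> Y), (forall v, f (q1 v) = g (q2 v)) ->
    exists k : V -> W, (forall v, p1 (k v) = q1 v) /\ (forall v, p2 (k v) = q2 v).

Definition preserves_weak_pullbacks (F : Functor) : Prop :=
  forall (X Y Z W : U) (f : X -> Z) (g : Y -> Z) (p1 : W -> X) (p2 : W -> Y),
    is_weak_pullback f g p1 p2 ->
    is_weak_pullback (fmap F f) (fmap F g) (fmap F p1) (fmap F p2).

Definition Rel {F : U -> U} (fm : forall A B : U, (A -> B) -> F A -> F B)
    {X Y : U} (R : X -> Y -> Prop) (b : F X) (c : F Y) : Prop :=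
  exists d : F {p : X * Y | R (fst p) (snd p)},
    fm _ _ (fun p => fst (proj1_sig p)) d = b /\
    fm _ _ (fun p => snd (proj1_sig p)) d = c.

Definition Rel_le {F : U -> U} (fm : forall A B : U, (A -> B) -> F A -> F B)
    (le : forall A : U, F A -> F A -> Prop)
    {X Y : U} (R : X -> Y -> Prop) (b : F X) (c : F Y) : Prop :=
  exists (b' : F X) (c' : F Y), le X b b' /\ Rel fm R b' c' /\ le Y c' c.

Definition simulation {F : U -> U} (fm : forall A B : U, (A -> B) -> F A -> F B)
    (le : forall A : U, F A -> F A -> Prop)
    {X Y : U} (f : X -> F X) (g : Y -> F Y) (R : X -> Y -> Prop) : Prop :=
  forall x y, R x y -> Rel_le fm le R (f x) (g y).

Definition similarity {F : U -> U} (fm : forall A B : U, (A -> B) -> F A -> F B)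
    (le : forall A : U, F A -> F A -> Prop)
    {X Y : U} (f : X -> F X) (g : Y -> F Y) (x : X) (y : Y) : Prop :=
  exists R : X -> Y -> Prop, simulation fm le f g R /\ R x y.

(** Cofree comonad: for each X, a final B(-) x X coalgebra <theta_X, eps_X>,
    with the (unique) coalgebra morphism given by [unfold]. *)
Record CofreeComonad (B : Functor) : Type := {
  Binf : U -> U;
  theta : forall X : U, Binf X -> B (Binf X);
  eps : forall X : U, Binf X -> X;
  unfold : forall (X C : U), (C -> B C) -> (C -> X) -> C -> Binf X;
  unfold_theta : forall (X C : U) (c : C -> B C) (e : C -> X) (x : C),
      theta X (unfold X C c e x) = fmap B (unfold X C c e) (c x);
  unfold_eps : forall (X C : U) (c : C -> B C) (e : C -> X) (x : C),
      eps X (unfold X C c e x) = e x;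
  unfold_unique : forall (X C : U) (c : C -> B C) (e : C -> X) (h : C -> Binf X),
      (forall x, theta X (h x) = fmap B h (c x)) ->
      (forall x, eps X (h x) = e x) ->
      forall x, h x = unfold X C c e x
}.

(** Free monad: for each X, an initial Sigma(-) + X algebra [iota_X, eta_X],
    with the (unique) algebra morphism given by [fold]. *)
Record FreeMonad (S : Functor) : Type := {
  Sstar : U -> U;
  iota : forall X : U, S (Sstar X) -> Sstar X;
  eta : forall X : U, X -> Sstar X;
  fold : forall (X A : U), (S A -> A) -> (X -> A) -> Sstar X -> A;
  fold_iota : forall (X A : U) (a : S A -> A) (b : X -> A) (t : S (Sstar X)),
      fold X A a b (iota X t) = a (fmap S (fold X A a b) t);
  fold_eta : forall (X A : U) (a : S A -> A) (b : X -> A) (x : X),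
      fold X A a b (eta X x) = b x;
  fold_unique : forall (X A : U) (a : S A -> A) (b : X -> A) (h : Sstar X -> A),
      (forall t, h (iota X t) = a (fmap S h t)) ->
      (forall x, h (eta X x) = b x) ->
      forall t, h t = fold X A a b t
}.

Arguments Binf {B} _ _.
Arguments theta {B} _ _ _.
Arguments eps {B} _ _ _.
Arguments unfold {B} _ _ _ _ _ _.
Arguments Sstar {S} _ _.
Arguments iota {S} _ _ _.
Arguments eta {S} _ _ _.
Arguments fold {S} _ _ _ _ _ _.

Section Derived.
Context {B : Functor} (C : CofreeComonad B) {S : Functor} (M : FreeMonad S).

Definition coext {X : U} (f : X -> B X) : X -> Binf C X :=
  unfold C X X f (fun x => x).
Definition Binf_map {X Y : U} (h : X -> Y) : Binf C X -> Binf C Y :=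
  unfold C Y (Binf C X) (theta C X) (fun t => h (eps C X t)).
Definition delta (X : U) : Binf C X -> Binf C (Binf C X) :=
  @coext (Binf C X) (theta C X).

Definition Sstar_map {X Y : U} (h : X -> Y) : Sstar M X -> Sstar M Y :=
  fold M X (Sstar M Y) (iota M Y) (fun x => eta M Y (h x)).
Definition mu (X : U) : Sstar M (Sstar M X) -> Sstar M X :=
  fold M (Sstar M X) (Sstar M X) (iota M X) (fun t => t).

Definition prodF (X : U) : U -> U := fun Y => (B Y * X)%type.
Definition prodF_map (X : U) : forall A A' : U, (A -> A') -> prodF X A -> prodF X A' :=
  fun A A' h p => (fmap B h (fst p), snd p).
Definition prodF_le (le : forall X : U, B X -> B X -> Prop) (X : U) :
    forall A : U, prodF X A -> prodF X A -> Prop :=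
  fun A p q => le A (fst p) (fst q) /\ snd p = snd q.

Definition lesim (le : forall X : U, B X -> B X -> Prop) (X : U) :
    Binf C X -> Binf C X -> Prop :=
  similarity (prodF_map X) (prodF_le le X)
    (fun t => (theta C X t, eps C X t)) (fun t => (theta C X t, eps C X t)).

Definition biGSOS_natural (rho : forall X : U, S (Binf C X) -> B (Sstar M X)) : Prop :=
  forall (X Y : U) (h : X -> Y) (u : S (Binf C X)),
    rho Y (fmap S (Binf_map h) u) = fmap B (Sstar_map h) (rho X u).

Definition monotone_biGSOS (le : forall X : U, B X -> B X -> Prop)
    (rho : forall X : U, S (Binf C X) -> B (Sstar M X)) : Prop :=
  forall (X : U) (u v : S (Binf C X)),
    Rel (fun A A' (h : A -> A') => fmap S h) (lesim le X) u v ->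
    le (Sstar M X) (rho X u) (rho X v).

Definition supported_model (rho : forall X : U, S (Binf C X) -> B (Sstar M X))
    (f : Sstar M Empty_set -> B (Sstar M Empty_set)) : Prop :=
  forall t : S (Sstar M Empty_set),
    f (iota M Empty_set t) =
    fmap B (mu Empty_set) (rho (Sstar M Empty_set) (fmap S (coext f) t)).

Definition least_supported_model (le : forall X : U, B X -> B X -> Prop)
    (rho : forall X : U, S (Binf C X) -> B (Sstar M X))
    (f : Sstar M Empty_set -> B (Sstar M Empty_set)) : Prop :=
  supported_model rho f /\
  forall g, supported_model rho g -> forall t, le (Sstar M Empty_set) (f t) (g t).

Definition distributive_law (lam : forall X : U, Sstar M (Binf C X) -> Binf C (Sstar M X)) : Prop :=
  (forall (X Y : U) (h : X -> Y) (t : Sstar M (Binf C X)),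
      lam Y (Sstar_map (Binf_map h) t) = Binf_map (Sstar_map h) (lam X t)) /\
  (forall (X : U) (d : Binf C X), lam X (eta M (Binf C X) d) = Binf_map (eta M X) d) /\
  (forall (X : U) (t : Sstar M (Binf C X)), eps C (Sstar M X) (lam X t) = Sstar_map (eps C X) t) /\
  (forall (X : U) (t : Sstar M (Sstar M (Binf C X))),
      lam X (mu (Binf C X) t) = Binf_map (mu X) (lam (Sstar M X) (Sstar_map (lam X) t))) /\
  (forall (X : U) (t : Sstar M (Binf C X)),
      Binf_map (lam X) (lam (Binf C X) (Sstar_map (delta X) t)) = delta (Sstar M X) (lam X t)).

Definition op_model_eq (lam : forall X : U, Sstar M (Binf C X) -> Binf C (Sstar M X))
    (m : Sstar M Empty_set -> B (Sstar M Empty_set)) : Prop :=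
  forall t : Sstar M (Sstar M Empty_set),
    coext m (mu Empty_set t) =
    Binf_map (mu Empty_set) (lam (Sstar M Empty_set) (Sstar_map (coext m) t)).

Definition operational_model (lam : forall X : U, Sstar M (Binf C X) -> Binf C (Sstar M X))
    (m : Sstar M Empty_set -> B (Sstar M Empty_set)) : Prop :=
  op_model_eq lam m /\ forall m', op_model_eq lam m' -> forall t, m' t = m t.

End Derived.

From Stdlib Require Import FunctionalExtensionality Classical ClassicalEpsilon.

(* For a coalgebra [v : V -> B V], the maps [K : Sstar V -> B (Sstar V)] extending [v]
   along [rho] are the fixpoints of the operator sending [K] to
   [iota s |-> B mu (rho (Sigma K^oo s))], [eta x |-> B eta (v x)].
   Monotonicity of [rho] makes it monotone ([K <= K'] pointwise gives [K^oo <~ K'^oo]),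
   and maps into [B (Sstar V)] form a pointed DCPO, so it has a least fixpoint by the
   Bourbaki-Witt argument; no continuity is needed.  Extending [theta_X] this way gives a
   coalgebra on [Sstar (Binf X)], and [lam_X] is its unfolding with labels [Sstar eps_X].
   All distributive law axioms then follow by finality from two facts: least extensions
   commute with coalgebra morphisms and with [mu].  Both are proved by fixpoint induction
   on pairs of maps, where the induction predicate is closed under directed suprema
   because each [B f] preserves them.  The least supported model is the least extension
   of the empty coalgebra. *)

Lemma fmap_ext (F : Functor) (A A' : U) (f g : A -> A') (x : F A) :
  (forall a, f a = g a) -> fmap F f x = fmap F g x.
Proof. intros H. now rewrite (functional_extensionality f g H). Qed.

Lemma fmap_fmap (F : Functor) (A A' A'' : U) (f : A -> A') (g : A' -> A'') (x : F A) :
  fmap F g (fmap F f x) = fmap F (fun a => g (f a)) x.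
Proof. symmetry; apply fmap_comp. Qed.

Section Cofree.
Context {B : Functor} (C : CofreeComonad B).

Lemma unfold_ext X Y (c : Y -> B Y) (e1 e2 : Y -> X) :
  (forall y, e1 y = e2 y) -> forall y, unfold C X Y c e1 y = unfold C X Y c e2 y.
Proof.
  intros He y. symmetry. apply unfold_unique.
  - intros x. apply unfold_theta.
  - intros x. rewrite unfold_eps. symmetry; apply He.
Qed.

Lemma unfold_coalg_morph X Y Z (c1 : Y -> B Y) (c2 : Z -> B Z) (g : Y -> Z) (e : Z -> X) :
  (forall y, fmap B g (c1 y) = c2 (g y)) ->
  forall y, unfold C X Z c2 e (g y) = unfold C X Y c1 (fun a => e (g a)) y.
Proof.
  intros Hg. apply (unfold_unique _ C X Y c1 _ (fun a => unfold C X Z c2 e (g a))).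
  - intros y. now rewrite unfold_theta, <- Hg, fmap_fmap.
  - intros y. apply unfold_eps.
Qed.

Lemma Binf_map_unfold X X' Y (h : X -> X') (c : Y -> B Y) (e : Y -> X) y :
  Binf_map C h (unfold C X Y c e y) = unfold C X' Y c (fun a => h (e a)) y.
Proof.
  apply (unfold_unique _ C X' Y c _ (fun a => Binf_map C h (unfold C X Y c e a))).
  - intros x. unfold Binf_map. now rewrite !unfold_theta, fmap_fmap.
  - intros x. unfold Binf_map. now rewrite !unfold_eps.
Qed.

Lemma Binf_map_theta X Y (h : X -> Y) d :
  theta C Y (Binf_map C h d) = fmap B (Binf_map C h) (theta C X d).
Proof. apply unfold_theta. Qed.

Lemma Binf_map_eps X Y (h : X -> Y) d : eps C Y (Binf_map C h d) = h (eps C X d).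
Proof. apply unfold_eps. Qed.

Lemma coext_theta X (f : X -> B X) x : theta C X (coext C f x) = fmap B (coext C f) (f x).
Proof. apply unfold_theta. Qed.

Lemma coext_eps X (f : X -> B X) x : eps C X (coext C f x) = x.
Proof. apply unfold_eps. Qed.

Lemma coext_coalg_morph V W (c1 : V -> B V) (c2 : W -> B W) (g : V -> W) :
  (forall y, fmap B g (c1 y) = c2 (g y)) ->
  forall y, coext C c2 (g y) = Binf_map C g (coext C c1 y).
Proof.
  intros Hg y. unfold coext at 1. rewrite (unfold_coalg_morph _ _ _ c1 c2 g); auto.
  unfold coext. now rewrite Binf_map_unfold.
Qed.

Lemma coext_inj X (f g : X -> B X) :
  (forall x, coext C f x = coext C g x) -> forall x, f x = g x.
Proof.
  intros H x.
  assert (E : fmap B (coext C f) (f x) = fmap B (coext C g) (g x))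
    by now rewrite <- !coext_theta, H.
  apply (f_equal (fmap B (eps C X))) in E. rewrite !fmap_fmap in E.
  rewrite (fmap_ext B _ _ _ (fun z => z) (f x)) in E by (intros; apply coext_eps).
  rewrite (fmap_ext B _ _ _ (fun z => z) (g x)) in E by (intros; apply coext_eps).
  now rewrite !fmap_id in E.
Qed.

End Cofree.

Section Free.
Context {S : Functor} (M : FreeMonad S).

Lemma fold_ext X A (a : S A -> A) (b1 b2 : X -> A) :
  (forall x, b1 x = b2 x) -> forall t, fold M X A a b1 t = fold M X A a b2 t.
Proof.
  intros Hb t. symmetry. apply fold_unique.
  - intros; apply fold_iota.
  - intros x. rewrite fold_eta. symmetry; apply Hb.
Qed.

Lemma fold_iota_eta X (t : Sstar M X) : fold M X (Sstar M X) (iota M X) (eta M X) t = t.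
Proof.
  symmetry. apply (fold_unique _ M X _ (iota M X) (eta M X) (fun t => t)).
  - intros s. now rewrite fmap_id.
  - reflexivity.
Qed.

Lemma fold_fusion X A A' (a : S A -> A) (b : X -> A) (a' : S A' -> A') (h : A -> A') :
  (forall s, h (a s) = a' (fmap S h s)) ->
  forall t, h (fold M X A a b t) = fold M X A' a' (fun x => h (b x)) t.
Proof.
  intros Hh. apply (fold_unique _ M X A' a' _ (fun t => h (fold M X A a b t))).
  - intros s. now rewrite fold_iota, Hh, fmap_fmap.
  - intros x. now rewrite fold_eta.
Qed.

Lemma Sstar_map_iota X Y (h : X -> Y) s :
  Sstar_map M h (iota M X s) = iota M Y (fmap S (Sstar_map M h) s).
Proof. apply fold_iota. Qed.

Lemma Sstar_map_eta X Y (h : X -> Y) x : Sstar_map M h (eta M X x) = eta M Y (h x).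
Proof. apply fold_eta. Qed.

Lemma Sstar_map_ext X Y (f g : X -> Y) :
  (forall x, f x = g x) -> forall t, Sstar_map M f t = Sstar_map M g t.
Proof. intros H. apply fold_ext. intros x; now rewrite H. Qed.

Lemma Sstar_map_id X t : Sstar_map M (fun x : X => x) t = t.
Proof. apply fold_iota_eta. Qed.

Lemma Sstar_map_comp X Y Z (f : X -> Y) (g : Y -> Z) t :
  Sstar_map M g (Sstar_map M f t) = Sstar_map M (fun x => g (f x)) t.
Proof.
  unfold Sstar_map at 2. rewrite fold_fusion with (a' := iota M Z).
  - apply fold_ext. intros; apply Sstar_map_eta.
  - intros s; apply Sstar_map_iota.
Qed.

Lemma mu_iota X s : mu M X (iota M (Sstar M X) s) = iota M X (fmap S (mu M X) s).
Proof. apply fold_iota. Qed.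

Lemma mu_eta X t : mu M X (eta M (Sstar M X) t) = t.
Proof. apply fold_eta. Qed.

Lemma mu_Sstar_map_eta X t : mu M X (Sstar_map M (eta M X) t) = t.
Proof.
  unfold Sstar_map. rewrite fold_fusion with (a' := iota M X).
  - rewrite (fold_ext _ _ _ _ (eta M X)) by (intros; apply mu_eta). apply fold_iota_eta.
  - intros; apply mu_iota.
Qed.

Lemma mu_natural X Y (h : X -> Y) t :
  mu M Y (Sstar_map M (Sstar_map M h) t) = Sstar_map M h (mu M X t).
Proof.
  unfold Sstar_map at 1. rewrite (fold_fusion _ _ _ _ _ (iota M Y) (mu M Y)).
  - unfold mu at 2. rewrite (fold_fusion _ _ _ _ _ (iota M Y) (Sstar_map M h)).
    + apply fold_ext. intros x. apply mu_eta.
    + intros; apply Sstar_map_iota.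
  - intros; apply mu_iota.
Qed.

Lemma mu_assoc X t :
  mu M X (Sstar_map M (mu M X) t) = mu M X (mu M (Sstar M X) t).
Proof.
  change (mu M (Sstar M X) t) with (fold M _ _ (iota M (Sstar M X)) (fun x => x) t).
  unfold Sstar_map. rewrite !(fold_fusion _ _ _ _ _ (iota M X) (mu M X))
    by (intros; apply mu_iota).
  apply fold_ext. intros x. apply mu_eta.
Qed.

Definition roll {V : U} (z : (S (Sstar M V) + V)%type) : Sstar M V :=
  match z with inl s => iota M V s | inr x => eta M V x end.

Definition unroll {V : U} : Sstar M V -> (S (Sstar M V) + V)%type :=
  fold M V _ (fun s => inl (fmap S roll s)) inr.

Lemma roll_unroll V (t : Sstar M V) : roll (unroll t) = t.
Proof.
  rewrite <- (fold_iota_eta V t) at 2. unfold unroll.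
  apply (fold_unique _ M V _ (iota M V) (eta M V) (fun t => roll (fold M V _ _ inr t))).
  - intros s. rewrite fold_iota. simpl. now rewrite fmap_fmap.
  - intros x. now rewrite fold_eta.
Qed.

Lemma unroll_iota V s : unroll (iota M V s) = inl s.
Proof.
  unfold unroll. rewrite fold_iota. f_equal. rewrite fmap_fmap.
  rewrite (fmap_ext _ _ _ _ (fun a => a)) by apply roll_unroll. apply fmap_id.
Qed.

Lemma unroll_eta V x : unroll (eta M V x) = inr x.
Proof. apply fold_eta. Qed.

Lemma Sstar_cases V (t : Sstar M V) :
  (exists s, t = iota M V s) \/ (exists x, t = eta M V x).
Proof. rewrite <- (roll_unroll V t). destruct (unroll t) as [s|x]; simpl; eauto. Qed.

End Free.

Definition directed_or_empty {T : Type} (le : T -> T -> Prop) (E : T -> Prop) : Prop :=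
  directed le E \/ forall x, ~ E x.

Definition image {T T' : Type} (f : T -> T') (E : T -> Prop) : T' -> Prop :=
  fun y => exists x, E x /\ y = f x.

Lemma directed_or_empty_image {T T' : Type} (le : T -> T -> Prop) (le' : T' -> T' -> Prop)
    (f : T -> T') (E : T -> Prop) :
  (forall x y, le x y -> le' (f x) (f y)) ->
  directed_or_empty le E -> directed_or_empty le' (image f E).
Proof.
  intros Hf [[[x Ex] Hd]|He].
  - left. split; [exists (f x), x; auto|].
    intros a b [x1 [E1 ->]] [x2 [E2 ->]]. destruct (Hd x1 x2 E1 E2) as [z [Ez [H1 H2]]].
    exists (f z). repeat split; auto. exists z; auto.
  - right. intros y [x [Ex _]]. exact (He x Ex).
Qed.

Lemma lub_unique_ext {T : Type} (le : T -> T -> Prop)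
    (anti : forall x y, le x y -> le y x -> x = y) (E E' : T -> Prop) s s' :
  (forall x, E x <-> E' x) -> is_lub le E s -> is_lub le E' s' -> s = s'.
Proof.
  intros HE [Hub Hl] [Hub' Hl']. apply anti.
  - apply Hl. intros x Ex. apply Hub', HE, Ex.
  - apply Hl'. intros x Ex. apply Hub, HE, Ex.
Qed.

Record pdcpo := {
  pcar :> Type;
  ple : pcar -> pcar -> Prop;
  ple_refl : forall x, ple x x;
  ple_trans : forall x y z, ple x y -> ple y z -> ple x z;
  ple_anti : forall x y, ple x y -> ple y x -> x = y;
  lub_exists : forall E, directed_or_empty ple E -> exists s, is_lub ple E s
}.
Arguments ple {p} _ _.

Section LeastFixpoint.
Variables (D : pdcpo) (F : D -> D).
Hypothesis F_mono : forall x y, ple x y -> ple (F x) (F y).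

Definition sup_closed (P : D -> Prop) : Prop :=
  forall E s, directed_or_empty ple E -> (forall x, E x -> P x) -> is_lub ple E s -> P s.

Definition admissible (P : D -> Prop) : Prop := (forall x, P x -> P (F x)) /\ sup_closed P.

Definition reachable (x : D) : Prop := forall P, admissible P -> P x.

Lemma reachable_admissible : admissible reachable.
Proof.
  split.
  - intros x Hx P HP. apply (proj1 HP), Hx, HP.
  - intros E s HE HEr Hs P HP. apply (proj2 HP) with E; auto.
    intros x Ex. apply HEr; auto.
Qed.

Lemma reachable_le_F x : reachable x -> ple x (F x).
Proof.
  intros Hx. apply Hx. split.
  - intros y Hy. apply F_mono, Hy.
  - intros E s _ HE Hs. apply (proj2 Hs). intros d Ed.
    apply ple_trans with (F d); auto. apply F_mono, (proj1 Hs), Ed.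
Qed.

Definition extreme (x : D) : Prop :=
  reachable x /\ forall y, reachable y -> ple y x -> y <> x -> ple (F y) x.

Lemma extreme_compare x : extreme x -> forall y, reachable y -> ple y x \/ ple (F x) y.
Proof.
  intros [Rx Ex] y Ry.
  enough (H : reachable y /\ (ple y x \/ ple (F x) y)) by apply H.
  apply Ry. split.
  - intros z [Rz [Hz|Hz]]; split; try apply (proj1 reachable_admissible), Rz.
    + destruct (classic (z = x)) as [->|Hne]; [right; apply ple_refl|left; auto].
    + right. apply ple_trans with z; auto. apply reachable_le_F, Rz.
  - intros E s HE HEP Hs. split.
    + apply (proj2 reachable_admissible) with E; auto. intros; apply HEP; auto.
    + destruct (classic (exists d, E d /\ ple (F x) d)) as [[d [Ed Hd]]|Hn].
      * right. apply ple_trans with d; auto. apply (proj1 Hs), Ed.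
      * left. apply (proj2 Hs). intros d Ed.
        destruct (HEP d Ed) as [_ [H|H]]; auto. exfalso; eauto.
Qed.

Lemma reachable_extreme x : reachable x -> extreme x.
Proof.
  intros Rx. apply Rx. split.
  - intros z Ez. split; [apply (proj1 reachable_admissible), (proj1 Ez)|].
    intros y Ry Hle Hne. destruct (extreme_compare z Ez y Ry) as [H|H].
    + destruct (classic (y = z)) as [->|Hn]; [apply ple_refl|].
      apply ple_trans with z; [apply (proj2 Ez); auto|apply reachable_le_F, (proj1 Ez)].
    + exfalso. apply Hne, ple_anti; auto.
  - intros E s HE HEP Hs. split.
    + apply (proj2 reachable_admissible) with E; auto. intros; apply HEP; auto.
    + intros y Ry Hle Hne.
      destruct (classic (exists d, E d /\ ~ ple d y)) as [[d [Ed Hd]]|Hn].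
      * destruct (extreme_compare d (HEP d Ed) y Ry) as [H|H].
        -- apply ple_trans with d; [|apply (proj1 Hs), Ed].
           apply (proj2 (HEP d Ed)); auto. intros ->. apply Hd, ple_refl.
        -- exfalso. apply Hd. apply ple_trans with (F d); auto.
           apply reachable_le_F, (proj1 (HEP d Ed)).
      * exfalso. apply Hne, ple_anti; auto. apply (proj2 Hs). intros d Ed.
        apply NNPP. intros Hc. apply Hn; eauto.
Qed.

(* Reachable elements form a chain; its supremum is the least fixpoint. *)
Theorem lfp_exists :
  exists p, F p = p /\ (forall q, ple (F q) q -> ple p q) /\ (forall P, admissible P -> P p).
Proof.
  assert (Hdir : directed ple reachable).
  { split.
    - destruct (lub_exists D (fun _ => False) (or_intror (fun _ h => h))) as [b Hb].
      exists b. apply (proj2 reachable_admissible) with (fun _ => False); auto.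
      + right; auto.
      + intros _ [].
    - intros x y Rx Ry. destruct (extreme_compare x (reachable_extreme x Rx) y Ry) as [H|H].
      + exists x. repeat split; auto. apply ple_refl.
      + exists y. repeat split; auto; [|apply ple_refl].
        apply ple_trans with (F x); auto. apply reachable_le_F, Rx. }
  destruct (lub_exists D reachable (or_introl Hdir)) as [s Hs].
  assert (Rs : reachable s) by (apply (proj2 reachable_admissible) with reachable; auto; left; auto).
  exists s. split; [|split].
  - apply ple_anti; [apply (proj1 Hs), (proj1 reachable_admissible), Rs|].
    apply reachable_le_F, Rs.
  - intros q Hq. apply Rs. split.
    + intros x Hx. apply ple_trans with (F q); auto.
    + intros E s' _ HE Hs'. apply (proj2 Hs'). exact HE.
  - intros P HP. apply Rs, HP.
Qed.

End LeastFixpoint.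

Section Product.
Variables D1 D2 : pdcpo.

Definition prod_le (x y : D1 * D2) : Prop := ple (fst x) (fst y) /\ ple (snd x) (snd y).

Definition prod_pdcpo : pdcpo.
Proof.
  refine {| pcar := (D1 * D2)%type; ple := prod_le |}.
  - intros x; split; apply ple_refl.
  - intros x y z [H1 H2] [H3 H4]; split; eapply ple_trans; eauto.
  - intros [x1 x2] [y1 y2] [H1 H2] [H3 H4]; simpl in *. f_equal; apply ple_anti; auto.
  - intros E HE.
    destruct (lub_exists D1 (image fst E)) as [s1 [Hub1 Hl1]].
    { apply (directed_or_empty_image prod_le); auto. intros x y H; apply H. }
    destruct (lub_exists D2 (image snd E)) as [s2 [Hub2 Hl2]].
    { apply (directed_or_empty_image prod_le); auto. intros x y H; apply H. }
    exists (s1, s2). split.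
    + intros x Ex. split; [apply Hub1|apply Hub2]; exists x; auto.
    + intros u Hu. split; [apply Hl1|apply Hl2]; intros y [x [Ex ->]]; apply Hu, Ex.
Defined.

(* Least fixpoints of a map of the form (x1, x2) |-> (F x1, G x1 x2) are computed
   componentwise, so fixpoint induction applies to the pair of least fixpoints. *)
Lemma lfp_triangular_ind (F : D1 -> D1) (G : D1 -> D2 -> D2) (l1 : D1) (l2 : D2)
    (P : prod_pdcpo -> Prop) :
  (forall x y, ple x y -> ple (F x) (F y)) ->
  (forall x x' y y', ple x x' -> ple y y' -> ple (G x y) (G x' y')) ->
  F l1 = l1 -> (forall q, ple (F q) q -> ple l1 q) ->
  G l1 l2 = l2 -> (forall q, ple (G l1 q) q -> ple l2 q) ->
  admissible prod_pdcpo (fun x => (F (fst x), G (fst x) (snd x))) P -> P (l1, l2).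
Proof.
  intros HF HG Hl1 Hleast1 Hl2 Hleast2 HP.
  destruct (lfp_exists prod_pdcpo (fun x => (F (fst x), G (fst x) (snd x))))
    as [[p1 p2] [Hfix [Hleast Hind]]].
  { intros x y [H1 H2]. split; simpl; auto. }
  injection Hfix as Hp1 Hp2.
  assert (Hle : prod_le (p1, p2) (l1, l2)).
  { apply Hleast. simpl. rewrite Hl1, Hl2. apply (ple_refl prod_pdcpo). }
  assert (E1 : p1 = l1).
  { apply ple_anti; [apply Hle|apply Hleast1; rewrite Hp1; apply ple_refl]. }
  subst p1.
  assert (E2 : p2 = l2).
  { apply ple_anti; [apply Hle|apply Hleast2; rewrite Hp2; apply ple_refl]. }
  subst p2. apply Hind, HP.
Qed.

End Product.

Definition update {A T : Type} (f : A -> T) (a : A) (y : T) : A -> T :=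
  fun b => if excluded_middle_informative (b = a) then y else f b.

Lemma update_at {A T : Type} (f : A -> T) a y : update f a y a = y.
Proof. unfold update. now destruct (excluded_middle_informative (a = a)). Qed.

Section OrderedFunctor.
Context {B : Functor} (leB : forall X : U, B X -> B X -> Prop) (HB : dcpo_bot_ordered B leB).

Lemma leB_refl X x : leB X x x.
Proof. apply HB. Qed.

Lemma leB_trans X x y z : leB X x y -> leB X y z -> leB X x z.
Proof. apply HB. Qed.

Lemma leB_map X Y (f : X -> Y) x y : leB X x y -> leB Y (fmap B f x) (fmap B f y).
Proof. apply HB. Qed.

Lemma leB_anti X x y : leB X x y -> leB X y x -> x = y.
Proof. apply HB. Qed.

Lemma leB_lub_exists X E : directed_or_empty (leB X) E -> exists s, is_lub (leB X) E s.
Proof.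
  destruct HB as [_ [_ [Hbot [Hsup _]]]]. intros [Hd|He]; auto.
  destruct (Hbot X) as [b Hb]. exists b. split.
  - intros x Ex. exfalso; exact (He x Ex).
  - intros u _. apply Hb.
Qed.

Lemma fmap_lub X Y (f : X -> Y) E s :
  directed_or_empty (leB X) E -> is_lub (leB X) E s ->
  is_lub (leB Y) (image (fmap B f) E) (fmap B f s).
Proof. apply HB. Qed.

Definition fun_le (A : Type) (Y : U) (f g : A -> B Y) : Prop := forall a, leB Y (f a) (g a).

Definition fun_pdcpo (A : Type) (Y : U) : pdcpo.
Proof.
  refine {| pcar := A -> B Y; ple := fun_le A Y |}.
  - intros f a; apply leB_refl.
  - intros f g h H1 H2 a; eapply leB_trans; eauto.
  - intros f g H1 H2. apply functional_extensionality. intros a; apply leB_anti; auto.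
  - intros E HE.
    assert (Ha : forall a, exists y, is_lub (leB Y) (image (fun f => f a) E) y).
    { intros a. apply leB_lub_exists, (directed_or_empty_image (fun_le A Y)); [|exact HE].
      intros f g H; apply H. }
    apply choice in Ha as [s Hs]. exists s. split.
    + intros f Ef a. apply (proj1 (Hs a)). exists f; auto.
    + intros u Hu a. apply (proj2 (Hs a)). intros y [f [Ef ->]]. apply Hu, Ef.
Defined.

Section FunctionPairs.
Variables (A1 A2 : Type) (Y1 Y2 : U).
Let D := prod_pdcpo (fun_pdcpo A1 Y1) (fun_pdcpo A2 Y2).

Lemma fun_pair_lub_fst (E : D -> Prop) (s : D) t :
  is_lub ple E s -> is_lub (leB Y1) (image (fun x => fst x t) E) (fst s t).
Proof.
  intros Hs. split.
  - intros y [x [Ex ->]]. apply (proj1 Hs x Ex).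
  - intros u Hu.
    assert (Hle : ple s ((update (fst s) t u, snd s) : D)).
    { apply (proj2 Hs). intros x Ex. split; [|apply (proj1 Hs x Ex)].
      intros a. unfold update; simpl. destruct (excluded_middle_informative (a = t)) as [->|_].
      - apply Hu. exists x; auto.
      - apply (proj1 Hs x Ex). }
    specialize (proj1 Hle t). simpl. now rewrite update_at.
Qed.

Lemma fun_pair_lub_snd (E : D -> Prop) (s : D) t :
  is_lub ple E s -> is_lub (leB Y2) (image (fun x => snd x t) E) (snd s t).
Proof.
  intros Hs. split.
  - intros y [x [Ex ->]]. apply (proj1 Hs x Ex).
  - intros u Hu.
    assert (Hle : ple s ((fst s, update (snd s) t u) : D)).
    { apply (proj2 Hs). intros x Ex. split; [apply (proj1 Hs x Ex)|].
      intros a. unfold update; simpl. destruct (excluded_middle_informative (a = t)) as [->|_].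
      - apply Hu. exists x; auto.
      - apply (proj1 Hs x Ex). }
    specialize (proj2 Hle t). simpl. now rewrite update_at.
Qed.

Lemma fmap_eq_sup_closed (g : Y2 -> Y1) (h : A2 -> A1) :
  sup_closed D (fun x => forall t, fmap B g (snd x t) = fst x (h t)).
Proof.
  intros E s HE HEq Hs t.
  assert (Hdir : directed_or_empty (leB Y2) (image (fun x => snd x t) E)).
  { apply (directed_or_empty_image (@ple D)); auto. intros x y H; apply H. }
  apply (lub_unique_ext (leB Y1) (leB_anti Y1)
           (image (fmap B g) (image (fun x => snd x t) E)) (image (fun x => fst x (h t)) E)).
  - intros y. split.
    + intros [z [[x [Ex ->]] ->]]. exists x. split; auto.
    + intros [x [Ex ->]]. exists (snd x t). split; [exists x; auto|symmetry; auto].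
  - apply fmap_lub; auto. apply fun_pair_lub_snd, Hs.
  - apply fun_pair_lub_fst, Hs.
Qed.

End FunctionPairs.

End OrderedFunctor.

Section LeastExtension.
Context {B : Functor} (leB : forall X : U, B X -> B X -> Prop) (HB : dcpo_bot_ordered B leB).
Context (C : CofreeComonad B) {S : Functor} (M : FreeMonad S).
Context (rho : forall X : U, S (Binf C X) -> B (Sstar M X)).
Context (Hnat : biGSOS_natural C M rho) (Hmon : monotone_biGSOS C M leB rho).

Lemma coext_lesim V (K1 K2 : V -> B V) :
  fun_le leB V V K1 K2 -> forall x, lesim C leB V (coext C K1 x) (coext C K2 x).
Proof.
  intros HK x. exists (fun a b => exists y, a = coext C K1 y /\ b = coext C K2 y).
  split; [|exists x; auto].
  intros a b [y [-> ->]].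
  exists (fmap B (coext C K1) (K2 y), y), (fmap B (coext C K2) (K2 y), y).
  split; [|split].
  - unfold prodF_le; simpl. rewrite coext_theta, coext_eps. split; auto.
    apply leB_map; auto.
  - exists (fmap B (fun z => exist (fun p : Binf C V * Binf C V =>
              exists y0, fst p = coext C K1 y0 /\ snd p = coext C K2 y0)
              (coext C K1 z, coext C K2 z) (ex_intro _ z (conj eq_refl eq_refl))) (K2 y), y).
    unfold prodF_map; simpl. split; f_equal; apply fmap_fmap.
  - unfold prodF_le; simpl. rewrite coext_theta, coext_eps. split; auto. apply leB_refl; auto.
Qed.

Definition ext_step (V : U) (v : V -> B V) (K : Sstar M V -> B (Sstar M V)) :
    Sstar M V -> B (Sstar M V) :=
  fun t => match unroll M t with
           | inl s => fmap B (mu M V) (rho (Sstar M V) (fmap S (coext C K) s))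
           | inr x => fmap B (eta M V) (v x)
           end.

Lemma ext_step_iota V v K s :
  ext_step V v K (iota M V s) = fmap B (mu M V) (rho (Sstar M V) (fmap S (coext C K) s)).
Proof. unfold ext_step. now rewrite unroll_iota. Qed.

Lemma ext_step_eta V v K x : ext_step V v K (eta M V x) = fmap B (eta M V) (v x).
Proof. unfold ext_step. now rewrite unroll_eta. Qed.

Lemma ext_step_mono V (v1 v2 : V -> B V) K1 K2 :
  fun_le leB V V v1 v2 -> fun_le leB _ _ K1 K2 ->
  fun_le leB _ _ (ext_step V v1 K1) (ext_step V v2 K2).
Proof.
  intros Hv HK t. destruct (Sstar_cases M V t) as [[s ->]|[x ->]].
  - rewrite !ext_step_iota. apply leB_map; auto. apply Hmon.
    exists (fmap S (fun z => exist (fun p : Binf C (Sstar M V) * Binf C (Sstar M V) =>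
              lesim C leB _ (fst p) (snd p))
              (coext C K1 z, coext C K2 z) (coext_lesim _ K1 K2 HK z)) s).
    split; apply fmap_fmap.
  - rewrite !ext_step_eta. apply leB_map; auto.
Qed.

Definition ext_pdcpo (V : U) : pdcpo := fun_pdcpo leB HB (Sstar M V) (Sstar M V).

Lemma least_ext_exists V (v : V -> B V) :
  exists K : ext_pdcpo V, ext_step V v K = K /\
    forall q : ext_pdcpo V, ple (ext_step V v q : ext_pdcpo V) q -> ple K q.
Proof.
  destruct (lfp_exists (ext_pdcpo V) (ext_step V v)) as [K [HK [Hleast _]]]; eauto.
  intros K1 K2 H. apply ext_step_mono; auto. intros x; apply leB_refl; auto.
Qed.

Definition least_ext (V : U) (v : V -> B V) : Sstar M V -> B (Sstar M V) :=
  proj1_sig (constructive_indefinite_description _ (least_ext_exists V v)).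

Lemma least_ext_spec V v :
  ext_step V v (least_ext V v) = least_ext V v /\
  forall q, fun_le leB _ _ (ext_step V v q) q -> fun_le leB _ _ (least_ext V v) q.
Proof. apply (proj2_sig (constructive_indefinite_description _ (least_ext_exists V v))). Qed.

Lemma least_ext_fix V v t : ext_step V v (least_ext V v) t = least_ext V v t.
Proof. now rewrite (proj1 (least_ext_spec V v)). Qed.

Lemma least_ext_natural V W (v : V -> B V) (w : W -> B W) (g : V -> W) :
  (forall x, fmap B g (v x) = w (g x)) ->
  forall t, fmap B (Sstar_map M g) (least_ext V v t) = least_ext W w (Sstar_map M g t).
Proof.
  intros Hg.
  apply (lfp_triangular_ind (ext_pdcpo W) (ext_pdcpo V) (ext_step W w) (fun _ => ext_step V v)
           (least_ext W w) (least_ext V v)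
           (fun x => forall t, fmap B (Sstar_map M g) (snd x t) = fst x (Sstar_map M g t)));
    try apply least_ext_spec.
  - intros K1 K2 H. apply ext_step_mono; auto. intros x; apply leB_refl; auto.
  - intros _ _ K1 K2 _ H. apply ext_step_mono; auto. intros x; apply leB_refl; auto.
  - split; [|apply fmap_eq_sup_closed].
    intros [a b] Hab t. simpl in *. destruct (Sstar_cases M V t) as [[s ->]|[x ->]].
    + rewrite Sstar_map_iota, !ext_step_iota, fmap_fmap, fmap_fmap.
      rewrite (fmap_ext S _ _ (fun z => coext C a (Sstar_map M g z))
                 (fun z => Binf_map C (Sstar_map M g) (coext C b z)))
        by (intros z; apply coext_coalg_morph, Hab).
      rewrite <- (fmap_fmap S _ _ _ (coext C b)), Hnat, !fmap_fmap.
      apply fmap_ext. intros z. symmetry; apply mu_natural.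
    + rewrite Sstar_map_eta, !ext_step_eta, <- Hg, !fmap_fmap.
      apply fmap_ext. intros; apply Sstar_map_eta.
Qed.

Lemma least_ext_mu W (w : W -> B W) t :
  fmap B (mu M W) (least_ext (Sstar M W) (least_ext W w) t) = least_ext W w (mu M W t).
Proof.
  assert (Hfix := proj1 (least_ext_spec W w)).
  apply (lfp_triangular_ind (ext_pdcpo W) (ext_pdcpo (Sstar M W)) (ext_step W w)
           (fun a => ext_step (Sstar M W) (ext_step W w a))
           (least_ext W w) (least_ext (Sstar M W) (least_ext W w))
           (fun x => forall t, fmap B (mu M W) (snd x t) = fst x (mu M W t)));
    try rewrite Hfix; try reflexivity; try apply least_ext_spec.
  - intros K1 K2 H. apply ext_step_mono; auto. intros x; apply leB_refl; auto.
  - intros a a' K1 K2 Ha HK. apply ext_step_mono; auto.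
    apply ext_step_mono; auto. intros x; apply leB_refl; auto.
  - split; [|apply fmap_eq_sup_closed].
    intros [a b] Hab t'. simpl in *. destruct (Sstar_cases M _ t') as [[s ->]|[x ->]].
    + rewrite mu_iota, !ext_step_iota, (fmap_fmap S _ _ _ (mu M W) (coext C a)).
      rewrite (fmap_ext S _ _ (fun z => coext C a (mu M W z))
                 (fun z => Binf_map C (mu M W) (coext C b z)))
        by (intros z; apply coext_coalg_morph, Hab).
      rewrite <- (fmap_fmap S _ _ _ (coext C b)), Hnat, !fmap_fmap.
      apply fmap_ext. intros z. symmetry; apply mu_assoc.
    + rewrite mu_eta, !ext_step_eta, fmap_fmap.
      rewrite (fmap_ext B _ _ _ (fun z => z)) by (intros; apply mu_eta). apply fmap_id.
Qed.

Definition theta_ext (X : U) := least_ext (Binf C X) (theta C X).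

Definition lam (X : U) : Sstar M (Binf C X) -> Binf C (Sstar M X) :=
  unfold C (Sstar M X) (Sstar M (Binf C X)) (theta_ext X) (Sstar_map M (eps C X)).

Lemma lam_theta X t : theta C _ (lam X t) = fmap B (lam X) (theta_ext X t).
Proof. apply unfold_theta. Qed.

Lemma lam_eps X t : eps C _ (lam X t) = Sstar_map M (eps C X) t.
Proof. apply unfold_eps. Qed.

Lemma lam_natural X Y (h : X -> Y) t :
  lam Y (Sstar_map M (Binf_map C h) t) = Binf_map C (Sstar_map M h) (lam X t).
Proof.
  unfold lam at 1.
  rewrite (unfold_coalg_morph C _ _ _ (theta_ext X) (theta_ext Y))
    by (apply least_ext_natural; intros; symmetry; apply Binf_map_theta).
  unfold lam. rewrite Binf_map_unfold. apply unfold_ext. intros a.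
  rewrite !Sstar_map_comp. apply Sstar_map_ext. intros d. apply Binf_map_eps.
Qed.

Lemma lam_unit X d : lam X (eta M (Binf C X) d) = Binf_map C (eta M X) d.
Proof.
  unfold lam. rewrite (unfold_coalg_morph C _ _ _ (theta C X)).
  - apply unfold_ext. intros a. apply Sstar_map_eta.
  - intros y. unfold theta_ext. now rewrite <- least_ext_fix, ext_step_eta.
Qed.

Lemma lam_mult X t :
  lam X (mu M (Binf C X) t) = Binf_map C (mu M X) (lam (Sstar M X) (Sstar_map M (lam X) t)).
Proof.
  set (K := least_ext (Sstar M (Binf C X)) (theta_ext X)).
  unfold lam at 1.
  rewrite (unfold_coalg_morph C _ _ _ K (theta_ext X)) by apply least_ext_mu.
  unfold lam at 1.
  rewrite (unfold_coalg_morph C _ _ _ K (theta_ext (Sstar M X)))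
    by (apply least_ext_natural; intros; symmetry; apply lam_theta).
  rewrite Binf_map_unfold. apply unfold_ext. intros a.
  rewrite Sstar_map_comp, (Sstar_map_ext M _ _ _ (Sstar_map M (eps C X)))
    by (intros; apply lam_eps).
  symmetry; apply mu_natural.
Qed.

Lemma lam_comult X t :
  Binf_map C (lam X) (lam (Binf C X) (Sstar_map M (delta C X) t)) = delta C (Sstar M X) (lam X t).
Proof.
  unfold lam at 2.
  rewrite (unfold_coalg_morph C _ _ _ (theta_ext X) (theta_ext (Binf C X)))
    by (apply least_ext_natural; intros; symmetry; apply coext_theta).
  unfold delta. rewrite (coext_coalg_morph _ _ _ (theta_ext X) (theta C _) (lam X))
    by (intros; symmetry; apply lam_theta).
  unfold coext. rewrite !Binf_map_unfold. apply unfold_ext. intros a. f_equal.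
  rewrite Sstar_map_comp, (Sstar_map_ext M _ _ _ (fun z => z)) by (intros; apply coext_eps).
  apply Sstar_map_id.
Qed.

Lemma lam_distributive_law : distributive_law C M lam.
Proof.
  repeat split.
  - apply lam_natural.
  - apply lam_unit.
  - apply lam_eps.
  - apply lam_mult.
  - apply lam_comult.
Qed.

Definition least_model : Sstar M Empty_set -> B (Sstar M Empty_set) :=
  least_ext Empty_set (fun e => match e with end).

Lemma least_model_least_supported : least_supported_model C M leB rho least_model.
Proof.
  split.
  - intros t. unfold least_model. now rewrite <- least_ext_fix, ext_step_iota.
  - intros g Hg. apply least_ext_spec.
    intros a. destruct (Sstar_cases M _ a) as [[s ->]|[[] _]].
    rewrite ext_step_iota, Hg. apply leB_refl; auto.
Qed.

(* At [Sstar_map eta s] the right-hand side of the defining equation does not depend on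
   [m]: there [coext m] is only applied to a map out of the empty set. *)
Lemma op_model_eq_unique m m' :
  op_model_eq C M lam m -> op_model_eq C M lam m' -> forall t, m' t = m t.
Proof.
  intros Hm Hm'. apply (coext_inj C). intros s.
  rewrite <- (mu_Sstar_map_eta M _ s), Hm, Hm', !Sstar_map_comp.
  do 2 f_equal. apply Sstar_map_ext. intros [].
Qed.

Lemma least_model_operational : operational_model C M lam least_model.
Proof.
  assert (Heq : op_model_eq C M lam least_model).
  { intros t. set (K := least_ext (Sstar M Empty_set) least_model).
    rewrite (coext_coalg_morph _ _ _ K least_model (mu M Empty_set)) by apply least_ext_mu.
    unfold lam.
    rewrite (unfold_coalg_morph C _ _ _ K (theta_ext _) (Sstar_map M (coext C least_model)))
      by (apply least_ext_natural; intros; symmetry; apply coext_theta).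
    f_equal. unfold coext at 1. apply unfold_ext. intros a.
    rewrite Sstar_map_comp, (Sstar_map_ext M _ _ _ (fun z => z)) by (intros; apply coext_eps).
    symmetry; apply Sstar_map_id. }
  split; [exact Heq|]. intros m' Hm'. now apply op_model_eq_unique.
Qed.

End LeastExtension.

Theorem mainTheorem10 (B : Functor) (leB : forall X : U, B X -> B X -> Prop)
    (C : CofreeComonad B) (S : Functor) (M : FreeMonad S)
    (rho : forall X : U, S (Binf C X) -> B (Sstar M X)) :
  dcpo_bot_ordered B leB ->
  preserves_weak_pullbacks B ->
  biGSOS_natural C M rho ->
  monotone_biGSOS C M leB rho ->
  exists lam : forall X : U, Sstar M (Binf C X) -> Binf C (Sstar M X),
    distributive_law C M lam /\
    exists m : Sstar M Empty_set -> B (Sstar M Empty_set),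
      least_supported_model C M leB rho m /\ operational_model C M lam m.
Proof.
  intros HB _ Hnat Hmon.
  exists (lam leB HB C M rho Hmon). split.
  - apply lam_distributive_law, Hnat.
  - exists (least_model leB HB C M rho Hmon). split.
    + apply least_model_least_supported.
    + apply least_model_operational, Hnat.
Qed.
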